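(* Let $a\ge2$, $d\ge1$, $h\ge1$ and $s$ be integers with $\gcd(a,d)=1$ and $1\le s<a$. Let $\mathit{NR}$ be the set of positive integers not representable as $ax_0+\sum_{i=1}^s(ha+id)x_i$ with $x_0,\dots,x_s$ nonnegative integers, and let $S_m=\sum_{n\in\mathit{NR}}n^m$. Then for every integer $m\ge1$, \[ mS_{m-1}=a^{m-1}\sum_{n=0}^{a-1}B_m\!\left(h\lceil n/s\rceil+\frac{nd}{a}\right)-B_m, \] and, as an identity of functions (equivalently of power series about $z=0$), \[ \sum_{m=0}^\infty S_m\frac{z^m}{m!}=\frac{e^{(h\lceil\frac{a-1}{s}\rceil+d)az}-1}{(e^{dz}-1)(e^{az}-1)}+\frac{(e^{ahz}-1)\bigl(e^{\lceil\frac{a-1}{s}\rceil(ha+sd)z}-1\bigr)}{(e^{az}-1)(e^{(ha+sd)z}-1)(e^{-dz}-1)}-\frac{1}{e^z-1}. \]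
   Context: $B_m(x)$ denotes the Bernoulli polynomials, defined by $\frac{te^{tx}}{e^t-1}=\sum_{m\ge0}B_m(x)\frac{t^m}{m!}$, and $B_m=B_m(0)$. $\lceil x\rceil$ is the least integer not less than $x$. *)

From HB Require Import structures.
From mathcomp Require Import all_boot all_order all_algebra.
From mathcomp Require Import all_classical all_reals all_analysis.
Set Implicit Arguments. Unset Strict Implicit. Unset Printing Implicit Defensive.
Import Order.TTheory GRing.Theory Num.Theory.
Local Open Scope ring_scope.

(* Bernoulli numbers B_m = B_m(0) for t/(e^t-1): B_0 = 1 and, for m >= 1,
   sum_{k=0}^{m} C(m+1,k) B_k = 0 (coefficient comparison in
   (e^t-1)/t * t/(e^t-1) = 1). bern_seq n = [:: B_0; ...; B_n]. *)
Fixpoint bern_seq (R : fieldType) (n : nat) : seq R :=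
  match n with
  | 0 => [:: 1]
  | n'.+1 =>
      let s := bern_seq R n' in
      rcons s (- (\sum_(k < n'.+1) ('C(n'.+2, k))%:R * nth 0 s k) / (n'.+2)%:R)
  end.

Definition bernoulli (R : fieldType) (m : nat) : R := nth 0 (bern_seq R m) m.

(* Bernoulli polynomials: t e^{tx}/(e^t-1) = sum_m B_m(x) t^m/m!, i.e.
   B_m(x) = sum_k C(m,k) B_k x^(m-k) (Cauchy product of t/(e^t-1) and e^{tx}). *)
Definition bernoulli_poly (R : fieldType) (m : nat) (x : R) : R :=
  \sum_(k < m.+1) ('C(m, k))%:R * bernoulli R k * x ^+ (m - k).

Definition representable (a d h s n : nat) : Prop :=
  exists x : nat -> nat,
    n = (a * x 0 + \sum_(1 <= i < s.+1) (h * a + i * d) * x i)%N.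

Definition NR (a d h s n : nat) : Prop := (0 < n)%N /\ ~ representable a d h s n.

(* S_m = sum_{n in NR} n^m, computed over n < N, where N is any strict upper
   bound of NR (the theorem asserts that such a bound exists). *)
Definition Ssum (R : ringType) (a d h s N m : nat) : R :=
  \sum_(n < N | `[< NR a d h s n >]) (n%:R) ^+ m.

From mathcomp Require Import all_boot all_order all_algebra.
From mathcomp Require Import all_classical all_reals all_analysis.
From mathcomp Require Import ring zify.
Set Implicit Arguments. Unset Strict Implicit. Unset Printing Implicit Defensive.
Import Order.TTheory GRing.Theory Num.Theory.
Local Open Scope classical_set_scope.
Local Open Scope ring_scope.

(* Since [coprime a d], the residue classes modulo [a] are those of [n * d],
   [n < a]. A representation a x_0 + sum_i (h a + i d) x_i in the class of
   [n * d] has sum_i i x_i >= n, hence sum_i x_i >= ceil(n/s); so the least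
   representable number of the class is h ceil(n/s) a + n d, and every larger
   one is representable by adding multiples of [a]. The non-representable
   numbers are therefore, for each [n < a], an arithmetic progression of
   difference [a] below that bound. Summing powers along these progressions
   with the difference equation of the Bernoulli polynomials, reindexing the
   residues, and applying Raabe's multiplication formula gives the power-sum
   identity; summing e^(tz) along them as geometric series, with
   sum_n u^ceil(n/s) v^n in closed form, gives the generating function. *)

Section CharZeroPolynomials.
Variable R : numDomainType.
Implicit Type p : {poly R}.

Lemma deriv_eq0_polyC p : p^`() = 0 -> p = (p.[0])%:P.
Proof.
move=> dp; rewrite horner_coef0; apply/polyP => -[|i]; rewrite coefC //=.
have /eqP := congr1 (fun q : {poly R} => q`_i) dp.
by rewrite coef_deriv coef0 mulrn_eq0 => /eqP.
Qed.

Lemma periodic_polyC p : (forall x, p.[x + 1] = p.[x]) -> p = (p.[0])%:P.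
Proof.
move=> per; apply/eqP; rewrite -subr_eq0; apply/eqP.
set q := _ - _.
apply: (@roots_geq_poly_eq0 _ q [seq i%:R | i <- iota 0 (size q)]).
- apply/allP => _ /mapP [i _ ->]; rewrite /root /q !hornerE subr_eq0.
  by elim: i => // i IH; rewrite -addn1 natrD per.
- by rewrite map_inj_uniq ?iota_uniq // => i j /eqP; rewrite eqr_nat => /eqP.
- by rewrite size_map size_iota.
Qed.

End CharZeroPolynomials.

Section BernoulliPolynomials.
Variable R : numFieldType.

Definition bernpoly (m : nat) : {poly R} :=
  \sum_(k < m.+1) (('C(m, k))%:R * bernoulli R k) *: 'X^(m - k).

Lemma horner_bernpoly m x : (bernpoly m).[x] = bernoulli_poly m x.
Proof. by rewrite horner_sum; apply: eq_bigr => k _; rewrite hornerZ hornerXn. Qed.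

Lemma bernpoly0 : bernpoly 0 = 1.
Proof. by rewrite /bernpoly big_ord1 mul1r subnn scale1r. Qed.

Lemma size_bern_seq n : size (bern_seq R n) = n.+1.
Proof. by elim: n => //= n IH; rewrite size_rcons IH. Qed.

Lemma nth_bern_seq n k : (k <= n)%N -> nth 0 (bern_seq R n) k = bernoulli R k.
Proof.
elim: n => [|n IH]; first by rewrite leqn0 => /eqP ->.
rewrite leq_eqVlt => /orP [/eqP -> //|]; rewrite ltnS => le_kn.
by rewrite /= nth_rcons size_bern_seq ltnS le_kn IH.
Qed.

Lemma bernoulli_rec n : \sum_(k < n.+2) ('C(n.+2, k))%:R * bernoulli R k = 0.
Proof.
rewrite big_ord_recr /= binSn.
have -> : bernoulli R n.+1 =
    - (\sum_(k < n.+1) ('C(n.+2, k))%:R * bernoulli R k) / (n.+2)%:R.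
  rewrite {1}/bernoulli /= nth_rcons size_bern_seq ltnn eqxx.
  by congr (- _ / _); apply: eq_bigr => k _; rewrite nth_bern_seq // -ltnS.
by rewrite mulrCA mulfV ?mulr1 ?subrr // pnatr_eq0.
Qed.

Lemma bernpoly_at0 m : (bernpoly m).[0] = bernoulli R m.
Proof.
rewrite horner_sum big_ord_recr /= subnn binn mul1r hornerZ hornerXn expr0 mulr1.
rewrite big1 ?add0r // => k _.
by rewrite hornerZ hornerXn expr0n subn_eq0 leqNgt ltn_ord mulr0.
Qed.

Lemma bernpoly_at1 n : (bernpoly n.+2).[1] = (bernpoly n.+2).[0].
Proof.
rewrite bernpoly_at0 horner_sum big_ord_recr /= subnn binn mul1r hornerZ hornerXn.
rewrite expr1n mulr1 (_ : \sum_(k < n.+2) _ = 0) ?add0r //.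
rewrite -[RHS](bernoulli_rec n); apply: eq_bigr => k _.
by rewrite hornerZ hornerXn expr1n mulr1.
Qed.

Lemma deriv_bernpoly m : (bernpoly m.+1)^`() = (m.+1)%:R *: bernpoly m.
Proof.
rewrite /bernpoly big_ord_recr /= subnn expr0 derivD alg_polyC derivC addr0.
rewrite raddf_sum scaler_sumr; apply: eq_bigr => k _.
rewrite -[LHS]/(deriv _) derivZ derivXn (subSn (ltnSE (ltn_ord k))) /=.
rewrite -scalerMnr scalerMnl scalerA; congr (_ *: _).
have := mul_bin_down m.+1 k; rewrite (subSn (ltnSE (ltn_ord k))) => e.
by rewrite -mulr_natl mulrA -natrM -e natrM mulrA.
Qed.

Lemma bernpoly_shift m : bernpoly m \Po ('X + 1) - bernpoly m = m%:R *: 'X^(m.-1).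
Proof.
elim: m => [|m IH]; first by rewrite bernpoly0 comp_polyC subrr scale0r.
apply/eqP; rewrite -subr_eq0; apply/eqP; set E := _ - _.
have dE : E^`() = 0.
  rewrite /E !derivB deriv_comp !deriv_bernpoly derivD derivX derivC addr0 mulr1.
  by rewrite comp_polyZ -scalerBr IH derivZ derivXn /= scaler_nat subrr.
rewrite (deriv_eq0_polyC dE) /E !hornerE horner_comp !hornerE /=.
apply/eqP; rewrite polyC_eq0; apply/eqP.
case: m {IH E dE} => [|n]; last by rewrite bernpoly_at1 subrr expr0n mulr0 subrr.
rewrite /bernpoly !big_ord_recr big_ord0 !hornerE /bernoulli /= big_ord1 /=.
by rewrite addrK bin0 subrr.
Qed.

Lemma horner_bernpoly_shift m x :
  (bernpoly m).[x + 1] - (bernpoly m).[x] = m%:R * x ^+ m.-1.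
Proof.
have /(congr1 (horner^~ x)) := bernpoly_shift m.
by rewrite !hornerE horner_comp !hornerE.
Qed.

Lemma bernpoly_sum_pow m q y : (m.+1)%:R * \sum_(j < q) (j%:R + y) ^+ m =
  (bernpoly m.+1).[q%:R + y] - (bernpoly m.+1).[y].
Proof.
rewrite mulr_sumr -(big_mkord xpredT (fun j => m.+1%:R * (j%:R + y) ^+ m)).
rewrite (telescope_sumr_eq (fun j : nat => (bernpoly m.+1).[j%:R + y])) ?add0r //.
by move=> j _; rewrite -[j.+1%:R]natr1 addrAC horner_bernpoly_shift.
Qed.

End BernoulliPolynomials.

Section Raabe.
Variables (R : numFieldType) (a : nat).
Hypothesis a_gt0 : (0 < a)%N.

Let a_neq0 : a%:R != 0 :> R.
Proof. by rewrite pnatr_eq0 -lt0n. Qed.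

Let raabe m : {poly R} := (a%:R ^+ m / a%:R) *:
  \sum_(r < a) (bernpoly R m \Po (a%:R^-1 *: ('X + r%:R%:P))).

Let horner_raabe m x : (raabe m).[x] =
  a%:R ^+ m / a%:R * \sum_(r < a) (bernpoly R m).[(x + r%:R) / a%:R].
Proof.
rewrite hornerZ horner_sum; congr (_ * _); apply: eq_bigr => r _.
by rewrite horner_comp !hornerE mulrC.
Qed.

Let deriv_raabe m : (raabe m.+1)^`() = m.+1%:R *: raabe m.
Proof.
rewrite /raabe derivZ raddf_sum /= scalerA !scaler_sumr; apply: eq_bigr => r _.
rewrite deriv_comp deriv_bernpoly comp_polyZ derivZ derivD derivX derivC addr0.
rewrite mulr_algr !scalerA; congr (_ *: _).
by rewrite exprS; field.
Qed.

Let raabe_shift m x : (raabe m).[x + 1] - (raabe m).[x] = m%:R * x ^+ m.-1.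
Proof.
rewrite !horner_raabe -mulrBr -sumrB.
rewrite -(big_mkord xpredT (fun r => (bernpoly R m).[(x + 1 + r%:R) / a%:R]
                                 - (bernpoly R m).[(x + r%:R) / a%:R])).
rewrite (telescope_sumr_eq (fun r : nat => (bernpoly R m).[(x + r%:R) / a%:R])) //;
  last by move=> r _; rewrite -[r.+1%:R]natr1 addrA addrAC.
rewrite addr0 mulrDl divff // horner_bernpoly_shift.
case: m => [|m]; first by rewrite !mul0r mulr0.
by rewrite expr_div_n exprS /=; field; rewrite expf_neq0.
Qed.

Lemma bernpoly_sum_pow_arith m q r :
  (m.+1)%:R * \sum_(j < q) ((j * a + r)%N%:R) ^+ m =
  a%:R ^+ m * ((bernpoly R m.+1).[q%:R + r%:R / a%:R]
               - (bernpoly R m.+1).[r%:R / a%:R]).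
Proof.
rewrite -bernpoly_sum_pow mulrCA; congr (_ * _); rewrite mulr_sumr.
apply: eq_bigr => j _.
by rewrite -exprMn natrD natrM; congr (_ ^+ _); field.
Qed.

(* [raabe m - bernpoly m] is 1-periodic, hence constant; [m.+1] times it is the
   derivative of the constant [raabe m.+1 - bernpoly m.+1], so it vanishes. *)
Lemma bernpoly_raabe m x : a%:R ^+ m / a%:R *
  \sum_(r < a) (bernpoly R m).[(x + r%:R) / a%:R] = (bernpoly R m).[x].
Proof.
have raabe_const k : raabe k - bernpoly R k = ((raabe k - bernpoly R k).[0])%:P.
  apply: periodic_polyC => y; rewrite !(hornerD, hornerN).
  rewrite -[(raabe k).[y + 1]](subrK (raabe k).[y]) raabe_shift.
  by rewrite -horner_bernpoly_shift; ring.
have /eqP : (m.+1)%:R *: (raabe m - bernpoly R m) = 0.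
  by rewrite scalerBr -deriv_raabe -deriv_bernpoly -derivB raabe_const derivC.
rewrite scaler_eq0 pnatr_eq0 /= subr_eq0 => /eqP /(congr1 (horner^~ x)).
by rewrite horner_raabe.
Qed.

End Raabe.

Definition ceildivn (n s : nat) : nat := ((n + s.-1) %/ s)%N.

Section CeilDiv.
Variable s : nat.
Hypothesis s_gt0 : (0 < s)%N.

Lemma leq_ceildivn n X : (ceildivn n s <= X)%N = (n <= X * s)%N.
Proof. by rewrite -ltnS ltn_divLR //; lia. Qed.

Lemma ceildivn0 : ceildivn 0 s = 0%N.
Proof. by apply/eqP; rewrite -leqn0 leq_ceildivn. Qed.

Lemma ceildivn_le n : (ceildivn n s <= n)%N.
Proof. by rewrite leq_ceildivn leq_pmulr. Qed.

Lemma ceildivnS n : ceildivn n.+1 s = (ceildivn n s + (s %| n))%N.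
Proof.
rewrite /ceildivn addSnnS prednK // /dvdn.
have lt_rs := ltn_pmod n s_gt0.
rewrite {1 2}(divn_eq n s) -!addnA !divnMDl //.
case: (n %% s)%N lt_rs => [|r] lt_rs.
  by rewrite divnn s_gt0 (@divn_small s.-1) ?addn0 ?ltn_predL.
rewrite [(r.+1 + s.-1)%N]addSnnS prednK // !(addnC _ s).
rewrite -[s in (s + r.+1)%N]mul1n -[s in (s + r)%N]mul1n !divnMDl //.
by rewrite (divn_small lt_rs) (divn_small (ltnW lt_rs)) !addn0.
Qed.

Lemma ceil_natr_div (R : archiRealFieldType) n :
  Num.ceil (n%:R / s%:R : R) = (ceildivn n s)%:Z.
Proof.
have s_pos : 0 < s%:R :> R by rewrite ltr0n.
apply: ceil_def; rewrite ltr_pdivlMr // ler_pdivrMr //.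
apply/andP; split; last by rewrite pmulrn -natrM ler_nat -leq_ceildivn.
case E : (ceildivn n s) => [|c].
  by rewrite (lt_le_trans _ (ler0n _ n)) // pmulr_llt0 // ltrz0.
by rewrite -addn1 PoszD addrK pmulrn -natrM ltr_nat ltnNge -leq_ceildivn E ltnn.
Qed.

End CeilDiv.

Lemma sum_pow_ceildivn (R : comPzRingType) (u v : R) s b : (0 < s)%N ->
  (v - 1) * \sum_(n < b.+1) u ^+ ceildivn n s * v ^+ n =
  u ^+ ceildivn b s * v ^+ b.+1 - 1
  - (u - 1) * v * \sum_(k < ceildivn b s) (u * v ^+ s) ^+ k.
Proof.
move=> s_gt0; elim: b => [|b IH].
  by rewrite big_ord1 ceildivn0 // big_ord0 !expr0 mulr0 subr0 !mul1r mulr1 expr1.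
rewrite big_ord_recr /= mulrDr IH ceildivnS //.
case: (boolP (s %| b)%N) => [/dvdnP [k ->]|_] /=; last by rewrite addn0 !exprS; ring.
have -> : ceildivn (k * s) s = k by rewrite /ceildivn divnMDl // divn_small ?addn0 ?ltn_predL.
by rewrite addn1 big_ord_recr /= exprMn -exprM (mulnC s k) !exprS; ring.
Qed.

Lemma eqn_modMr_coprime a d x y : coprime a d ->
  (x * d == y * d %[mod a])%N = (x == y %[mod a])%N.
Proof.
move=> co_ad; wlog le_yx : x y / (y <= x)%N.
  by move=> H; case/orP: (leq_total y x) => /H //; rewrite eq_sym [in RHS]eq_sym.
by rewrite !eqn_mod_dvd ?leq_mul2r ?le_yx ?orbT // -mulnBl Gauss_dvdl.
Qed.

Section Representable.
Variables a d h s : nat.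

Lemma representable0 : representable a d h s 0.
Proof. by exists (fun=> 0%N); rewrite muln0 big1 // => i _; rewrite muln0. Qed.

Lemma representableD m n : representable a d h s m -> representable a d h s n ->
  representable a d h s (m + n).
Proof.
move=> [x ->] [y ->]; exists (fun i => x i + y i)%N.
by under [in RHS]eq_bigr do rewrite mulnDr; rewrite big_split /=; lia.
Qed.

Lemma representableMn k n : representable a d h s n -> representable a d h s (k * n).
Proof.
move=> rn; elim: k => [|k IH]; first exact: representable0.
by rewrite mulSn; apply: representableD.
Qed.

Lemma representable_a : representable a d h s a.
Proof.
exists (fun i => (i == 0)%N : nat); rewrite /= muln1 big_nat big1 ?addn0 // => i.
by case/andP=> i_gt0 _; rewrite eqn0Ngt i_gt0 muln0.
Qed.

Lemma representable_gen i : (0 < i <= s)%N -> representable a d h s (h * a + i * d).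
Proof.
move=> /andP[i_gt0 le_is]; exists (fun j => (j == i) : nat).
rewrite /= [0 == i]eq_sym eqn0Ngt i_gt0 muln0 add0n.
rewrite (eq_bigr (fun j => if j == i then h * a + j * d else 0))%N;
  last by move=> j _; case: eqP => _; rewrite ?muln1 ?muln0.
by rewrite -big_mkcond big_nat1_eq ltnS i_gt0 le_is.
Qed.

End Representable.

Section NonRepresentable.
Variables a d h s : nat.
Hypotheses (a_gt0 : (0 < a)%N) (co_ad : coprime a d) (s_gt0 : (0 < s)%N).

Definition least_repr n := (h * ceildivn n s * a + n * d)%N.

Lemma least_reprE n : least_repr n = (least_repr n %/ a * a + n * d %% a)%N.
Proof. by rewrite {1}(divn_eq (least_repr n) a) /least_repr modnMDl. Qed.

Lemma least_repr_leq t n : (n < a)%N -> t = n * d %[mod a] ->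
  representable a d h s t -> (least_repr n <= t)%N.
Proof.
move=> lt_na t_mod [x def_t]; rewrite def_t in t_mod *.
set X := (\sum_(1 <= i < s.+1) x i)%N; set Y := (\sum_(1 <= i < s.+1) i * x i)%N.
have sum_XY : (\sum_(1 <= i < s.+1) (h * a + i * d) * x i = h * a * X + Y * d)%N.
  by rewrite big_distrr big_distrl -big_split /=; apply: eq_bigr => i _; lia.
rewrite sum_XY in t_mod *.
have le_YX : (Y <= X * s)%N.
  rewrite /Y big_distrl /= !big_nat; apply: leq_sum => i /andP[_ lt_is].
  by rewrite mulnC leq_mul2l -ltnS lt_is orbT.
clearbody X Y.
have Y_mod : (Y = n %[mod a])%N.
  apply/eqP; rewrite -(eqn_modMr_coprime _ _ co_ad) -t_mod.
  by rewrite (_ : a * x 0 + _ = (x 0 + h * X) * a + Y * d)%N ?modnMDl //; lia.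
have le_nY : (n <= Y)%N by rewrite -(modn_small lt_na) -Y_mod leq_mod.
have le_cX : (ceildivn n s <= X)%N by rewrite leq_ceildivn // (leq_trans le_nY le_YX).
rewrite /least_repr mulnAC (leq_trans _ (leq_addl _ _)) //.
by apply: leq_add; apply: leq_mul.
Qed.

Lemma representable_least_repr n k : representable a d h s (least_repr n + k * a).
Proof.
have rep_ka := representableMn k (representable_a a d h s).
case: n => [|n]; first by rewrite /least_repr ceildivn0 // !muln0 mul0n add0n.
set c := ceildivn n.+1 s.
have c_gt0 : (0 < c)%N by rewrite ltnNge leq_ceildivn.
have lt_cn : (c.-1 * s < n.+1)%N.
  by rewrite ltnNge -leq_ceildivn // -/c leqNgt negbK ltn_predL.
have le_nc : (n.+1 <= c * s)%N by rewrite -leq_ceildivn.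
set rho := (n.+1 - c.-1 * s)%N.
have rho_s : (0 < rho <= s)%N by apply/andP; split; nia.
have def_n : n.+1 = (c.-1 * s + rho)%N by rewrite subnKC // ltnW.
rewrite (_ : least_repr _ + _ = k * a + (c.-1 * (h * a + s * d) + (h * a + rho * d)))%N;
  last by rewrite /least_repr -/c def_n -(prednK c_gt0) /=; clearbody c rho; lia.
apply/(representableD rep_ka)/representableD; last exact: representable_gen.
by apply/representableMn/representable_gen; rewrite s_gt0 leqnn.
Qed.

Lemma NR_iff t n : (n < a)%N -> t = n * d %[mod a] ->
  NR a d h s t <-> (t < least_repr n)%N.
Proof.
move=> lt_na t_mod; split.
  case=> _ nrep; rewrite ltnNge; apply/negP => le_wt; apply: nrep.
  have : (t == least_repr n %[mod a])%N by rewrite t_mod /least_repr modnMDl.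
  rewrite eqn_mod_dvd // => /dvdnP [k ek].
  by rewrite -(subnKC le_wt) ek; apply: representable_least_repr.
move=> lt_tw; split; last by move/(least_repr_leq lt_na t_mod); rewrite leqNgt lt_tw.
rewrite lt0n; apply: contraTneq lt_tw => t0; rewrite -leqNgt.
have /eqP : (n * d = 0 * d %[mod a])%N by rewrite -t_mod t0.
rewrite eqn_modMr_coprime // mod0n modn_small // => /eqP ->.
by rewrite /least_repr ceildivn0 // muln0 mul0n.
Qed.

Let mulmod (i : 'I_a) : 'I_a := Ordinal (ltn_pmod (i * d) a_gt0).

Let mulmod_inj : injective mulmod.
Proof.
move=> i j /(congr1 val) /eqP /=; rewrite eqn_modMr_coprime // !modn_small //.
by move/eqP/val_inj.
Qed.

Lemma exists_mulmod t : exists2 n, (n < a)%N & t = n * d %[mod a].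
Proof.
have [g mulmodK gK] := injF_bij mulmod_inj.
exists (g (Ordinal (ltn_pmod t a_gt0))) => //.
exact/esym/(congr1 val (gK _)).
Qed.

Lemma sum_mulmod (V : nmodType) (F : nat -> V) :
  (\sum_(n < a) F (n * d %% a)%N = \sum_(r < a) F r)%R.
Proof. by rewrite [RHS](reindex_inj mulmod_inj). Qed.

Lemma NR_bound t : NR a d h s t -> (t < h * a * a + a * d)%N.
Proof.
have [n lt_na t_mod] := exists_mulmod t.
move/(NR_iff lt_na t_mod)/leq_trans; apply; rewrite /least_repr.
have le_cn := ceildivn_le s_gt0 n.
by apply: leq_add; apply: leq_mul => //; [apply: leq_mul|]; lia.
Qed.

Lemma sum_residue_class (V : nmodType) N q r (F : nat -> V) : (r < a)%N ->
  (forall j, j < q -> j * a + r < N)%N ->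
  (\sum_(t < N | ((t %% a == r) && (t < q * a + r))%N) F t
   = \sum_(j < q) F (j * a + r)%N)%R.
Proof.
move=> lt_ra lt_N.
rewrite -(big_mkord (fun t => (t %% a == r) && (t < q * a + r))%N) -big_filter.
rewrite -(big_mkord xpredT (fun j => F (j * a + r)%N)).
rewrite -(big_map (fun j => j * a + r)%N xpredT).
apply: perm_big; apply: uniq_perm.
- by rewrite filter_uniq // iota_uniq.
- rewrite map_inj_uniq ?iota_uniq // => i j /eqP.
  by rewrite eqn_add2r eqn_pmul2r // => /eqP.
move=> t; rewrite mem_filter mem_iota /=.
apply/andP/mapP => [[/andP[/eqP t_mod lt_t] _]|].
  exists (t %/ a)%N; last by rewrite -t_mod -divn_eq.
  rewrite mem_iota add0n subn0 -(ltn_pmul2r a_gt0) -(ltn_add2r r).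
  by rewrite -{1}t_mod -divn_eq.
case=> j; rewrite mem_iota add0n subn0 /= => lt_jq ->.
rewrite modnMDl modn_small // eqxx ltn_add2r ltn_pmul2r // lt_jq add0n subn0.
by split; last exact: lt_N.
Qed.

Lemma sum_NR (V : nmodType) N (F : nat -> V) :
  (forall t, NR a d h s t -> t < N)%N ->
  (\sum_(t < N | `[< NR a d h s t >]) F t
   = \sum_(n < a) \sum_(j < (least_repr n %/ a)%N) F (j * a + n * d %% a)%N)%R.
Proof.
move=> lt_NR_N.
pose C t (n : 'I_a) := ((t %% a == n * d %% a) && (t < least_repr n))%N.
transitivity (\sum_(t < N) \sum_(n < a | C t n) F t)%R.
  rewrite big_mkcond; apply: eq_bigr => t _.
  have [n0 lt_n0a t_mod] := exists_mulmod t.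
  rewrite (eq_bigl (fun n => (n == Ordinal lt_n0a) && `[< NR a d h s t >])).
    case: asboolP => NRt; last by rewrite big_pred0 // => n; rewrite andbF.
    by rewrite (big_pred1 (Ordinal lt_n0a)) // => n; rewrite andbT.
  move=> n; rewrite /C t_mod eqn_modMr_coprime // !modn_small //.
  apply/andP/andP => -[/eqP n_n0 cond]; split; rewrite -?val_eqE /= ?n_n0 //.
    by apply/asboolP/(NR_iff lt_n0a t_mod); rewrite n_n0.
  exact/(NR_iff lt_n0a t_mod)/asboolP.
rewrite (exchange_big_dep xpredT) //=; apply: eq_bigr => n _.
rewrite -(@sum_residue_class _ N) ?ltn_pmod // => [|j lt_jq].
  by apply: eq_bigl => t; rewrite /C -least_reprE.
apply/lt_NR_N/(NR_iff (ltn_ord n)); first by rewrite modnMDl modn_mod.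
by rewrite [ltnRHS]least_reprE ltn_add2r ltn_pmul2r.
Qed.

Lemma sum_pow_NR (F : fieldType) (x : F) : x ^+ a != 1 ->
  \sum_(n < a) \sum_(j < (least_repr n %/ a)%N) x ^+ (j * a + n * d %% a)
  = (\sum_(n < a) x ^+ least_repr n - \sum_(r < a) x ^+ r) / (x ^+ a - 1).
Proof.
move=> xa_neq1; rewrite -(sum_mulmod (fun r => x ^+ r)) -sumrB mulr_suml.
apply: eq_bigr => n _; apply: (canRL (mulfK _)); first by rewrite subr_eq0.
set q := (least_repr n %/ a)%N; set r := (n * d %% a)%N.
have -> : \sum_(j < q) x ^+ (j * a + r) = x ^+ r * \sum_(j < q) (x ^+ a) ^+ j.
  by rewrite mulr_sumr; apply: eq_bigr => j _; rewrite exprD -exprM mulnC mulrC.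
rewrite -mulrA [_ * (_ - 1)]mulrC -subrX1 (least_reprE n) exprD -exprM mulnC.
by rewrite mulrBr mulr1 mulrC.
Qed.

End NonRepresentable.

Lemma cvg_exp_power_sums (R : realType) (I : Type) (r : seq I) (P : pred I)
    (f : I -> R) (z : R) :
  (fun k => \sum_(0 <= j < k) (\sum_(i <- r | P i) f i ^+ j) * z ^+ j / (j`!)%:R)
    @ \oo --> \sum_(i <- r | P i) expR (f i * z).
Proof.
have -> : (fun k => \sum_(0 <= j < k) (\sum_(i <- r | P i) f i ^+ j) * z ^+ j / (j`!)%:R)
    = (fun k => \sum_(i <- r | P i) series (exp_coeff (f i * z)) k).
  apply/funext => k; rewrite /series /= exchange_big; apply: eq_bigr => j _ /=.
  by rewrite !mulr_suml; apply: eq_bigr => i _; rewrite /exp_coeff /= exprMn.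
apply: cvg_big => [|i _]; first exact: add_continuous.
exact: is_cvg_series_exp_coeff.
Qed.

Section PowerSumsOfNonRepresentables.
Variables a d h s : nat.
Hypotheses (a_gt0 : (0 < a)%N) (co_ad : coprime a d) (d_gt0 : (0 < d)%N)
  (s_gt0 : (0 < s)%N).

Lemma NR_power_sum (R : archiRealFieldType) N m :
  (forall t, NR a d h s t -> t < N)%N ->
  m.+1%:R * Ssum R a d h s N m =
  a%:R ^+ m * \sum_(n < a) bernoulli_poly m.+1
      (h%:R * (Num.ceil (n%:R / s%:R : R))%:~R + n%:R * d%:R / a%:R)
  - bernoulli_poly m.+1 0.
Proof.
move=> lt_NR_N.
have a_neq0 : a%:R != 0 :> R by rewrite pnatr_eq0 -lt0n.
rewrite /Ssum (@sum_NR a d h s a_gt0 co_ad s_gt0 _ N (fun t => t%:R ^+ m)) // mulr_sumr.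
under eq_bigr do rewrite bernpoly_sum_pow_arith //.
rewrite -mulr_sumr sumrB mulrBr (sum_mulmod _ _ (fun r => (bernpoly R m.+1).[r%:R / a%:R])) //.
congr (_ * _ - _).
  apply: eq_bigr => n _; rewrite horner_bernpoly ceil_natr_div //; congr bernoulli_poly.
  apply: (mulIf a_neq0); rewrite !mulrDl !divfK // -!natrM -!natrD.
  by rewrite -least_reprE.
have := @bernpoly_raabe R a a_gt0 m.+1 0; rewrite exprS [a%:R * _]mulrC mulfK //.
by under eq_bigr do rewrite add0r; move->; rewrite horner_bernpoly.
Qed.

Lemma NR_exp_sum (R : realType) (z : R) : z != 0 ->
  let c : R := (ceildivn a.-1 s)%:R in
  \sum_(n < a) \sum_(j < (least_repr a d h s n %/ a)%N)
    expR ((j * a + n * d %% a)%N%:R * z) =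
  (expR ((h%:R * c + d%:R) * a%:R * z) - 1)
    / ((expR (d%:R * z) - 1) * (expR (a%:R * z) - 1))
  + (expR (a%:R * h%:R * z) - 1)
      * (expR (c * (h%:R * a%:R + s%:R * d%:R) * z) - 1)
    / ((expR (a%:R * z) - 1)
       * (expR ((h%:R * a%:R + s%:R * d%:R) * z) - 1)
       * (expR (- (d%:R * z)) - 1))
  - 1 / (expR z - 1).
Proof.
move=> z_neq0 c; set x := expR z.
have expR_natM k : expR (k%:R * z) = x ^+ k by exact: expRM_natl.
have x_neq1 k : (0 < k)%N -> x ^+ k != 1.
  move=> k_gt0; rewrite -expR_natM -[X in _ != X]expR0 (inj_eq (@expR_inj R)).
  by rewrite mulf_eq0 pnatr_eq0 eqn0Ngt k_gt0 (negbTE z_neq0).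
under eq_bigr do under eq_bigr do rewrite expR_natM.
rewrite sum_pow_NR ?x_neq1 //.
have sub1_neq0 k : (0 < k)%N -> x ^+ k - 1 != 0 by move=> k_gt0; rewrite subr_eq0 x_neq1.
have x_sub1_neq0 : x - 1 != 0 by rewrite -[x]expr1 sub1_neq0.
set C := ceildivn a.-1 s; set U := x ^+ (h * a); set V := x ^+ d.
set T := x ^+ (h * a + s * d).
have T_sub1_neq0 : T - 1 != 0 by rewrite sub1_neq0 // ltn_addl // muln_gt0 s_gt0.
have V_sub1_neq0 : V - 1 != 0 by rewrite sub1_neq0.
have sum_geom : \sum_(r < a) x ^+ r = (x ^+ a - 1) / (x - 1).
  by rewrite subrX1 mulrC mulKf.
have sum_least_repr : \sum_(n < a) x ^+ least_repr a d h s n =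
    (U ^+ C * V ^+ a - 1 - (U - 1) * V * ((T ^+ C - 1) / (T - 1))) / (V - 1).
  have := sum_pow_ceildivn U V a.-1 s_gt0; rewrite prednK // -/C.
  have -> : U * V ^+ s = T by rewrite -exprM -exprD (mulnC d).
  have -> : \sum_(k < C) T ^+ k = (T ^+ C - 1) / (T - 1) by rewrite subrX1 mulrC mulKf.
  move=> sumE.
  rewrite -[X in X / (V - 1)]sumE mulrC mulKf ?sub1_neq0 //.
  apply: eq_bigr => n _.
  by rewrite /least_repr exprD -!exprM mulnAC [(n * d)%N]mulnC.
rewrite sum_least_repr sum_geom /c -!natrM -!natrD -!natrM !expR_natM expRN expR_natM -/C.
rewrite (mulnC a h) -/U -/V -/T.
have -> : x ^+ (C * (h * a + s * d)) = T ^+ C by rewrite -exprM mulnC.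
have -> : x ^+ ((h * C + d) * a) = U ^+ C * V ^+ a.
  by rewrite -!exprM -exprD; congr (_ ^+ _); lia.
field; rewrite x_sub1_neq0 T_sub1_neq0 V_sub1_neq0 sub1_neq0 //.
by rewrite mulN1r -opprB oppr_eq0 V_sub1_neq0 expf_neq0 // expR_eq0.
Qed.

End PowerSumsOfNonRepresentables.

Theorem mainTheorem7 (R : realType) (a d h s : nat)
  (ha : (2 <= a)%N) (hd : (1 <= d)%N) (hh : (1 <= h)%N)
  (hcop : coprime a d) (hs1 : (1 <= s)%N) (hsa : (s < a)%N) :
  (exists N : nat, forall n : nat, NR a d h s n -> (n < N)%N) /\
  forall N : nat, (forall n : nat, NR a d h s n -> (n < N)%N) ->
    let S := Ssum R a d h s N in
    let c : R := (Num.ceil ((a.-1)%:R / s%:R : R))%:~R in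
    (forall m : nat, (1 <= m)%N ->
       m%:R * S m.-1 =
       a%:R ^+ m.-1 *
         \sum_(n < a)
           bernoulli_poly m
             (h%:R * (Num.ceil (n%:R / s%:R : R))%:~R + n%:R * d%:R / a%:R)
       - bernoulli_poly m 0)
    /\
    (forall z : R, z != 0 ->
       (fun k : nat => \sum_(0 <= j < k) S j * z ^+ j / (j`!)%:R) @ \oo -->
         (expR ((h%:R * c + d%:R) * a%:R * z) - 1)
           / ((expR (d%:R * z) - 1) * (expR (a%:R * z) - 1))
         + (expR (a%:R * h%:R * z) - 1)
             * (expR (c * (h%:R * a%:R + s%:R * d%:R) * z) - 1)
           / ((expR (a%:R * z) - 1)
              * (expR ((h%:R * a%:R + s%:R * d%:R) * z) - 1)
              * (expR (- (d%:R * z)) - 1))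
         - 1 / (expR z - 1)).
Proof.
have a_gt0 : (0 < a)%N by apply: ltnW.
split; first by exists (h * a * a + a * d)%N => t; apply: NR_bound.
move=> N lt_NR_N S c; split.
  by case=> [//|m] _; apply: NR_power_sum.
move=> z z_neq0.
have -> : c = (ceildivn a.-1 s)%:R by rewrite /c ceil_natr_div.
rewrite -(NR_exp_sum h a_gt0 hcop hd hs1 z_neq0).
rewrite -(@sum_NR a d h s a_gt0 hcop hs1 _ N (fun t => expR (t%:R * z))) //.
exact: cvg_exp_power_sums.
Qed.
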